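(* Let $f_0(2)=f_0(3)=1$ and $f_0(n)=0$ for all other $n\ge1$, and let $m\ge1$. For $n>3$ and $1\le k\le n$, $c_m(n,k)$ equals the number of words of length $n-1$ over the alphabet $\{0,1,\ldots,m\}$ with exactly $k-1$ letters equal to $1$, which begin with $0$ and end with $0$, which contain no run of more than $2$ consecutive zeros, and in which all nonzero letters are isolated (no two nonzero letters are adjacent).
   Context: For $m\ge 1$, $f_m$ is the invert transform of $f_{m-1}$, i.e. $f_m(n)=f_{m-1}(n)+\sum_{i=1}^{n-1}f_{m-1}(i)f_m(n-i)$ for $n\ge1$. For $m\ge1$ the numbers $c_m(n,k)$, $0\le k\le n$, are defined by $c_m(0,0)=1$, $c_m(n,0)=0$ for $n\ge1$, and $c_m(n,k)=\sum_{i=1}^{n-k+1}f_{m-1}(i)\,c_m(n-i,k-1)$ for $1\le k\le n$. *)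

From mathcomp Require Import all_boot.
Set Implicit Arguments. Unset Strict Implicit. Unset Printing Implicit Defensive.

Definition f0 (n : nat) : nat := if (n == 2) || (n == 3) then 1 else 0.

(* inv_list g n = [:: h 0; h 1; ...; h n] where h is the invert transform of g:
   h n = g n + \sum_{i=1}^{n-1} g i * h (n - i) for n >= 1 (h 0 := 0, unused). *)
Fixpoint inv_list (g : nat -> nat) (n : nat) : seq nat :=
  match n with
  | 0 => [:: 0]
  | n'.+1 =>
      let s := inv_list g n' in
      rcons s (g n'.+1 + \sum_(1 <= i < n'.+1) g i * nth 0 s (n'.+1 - i))
  end.

Definition invert (g : nat -> nat) (n : nat) : nat := nth 0 (inv_list g n) n.

Fixpoint f (m : nat) : nat -> nat :=
  match m with
  | 0 => f0
  | m'.+1 => invert (f m')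
  end.

(* c_aux fuel g n k computes the numbers defined by
   c(0,0)=1, c(n,0)=0 (n>=1), c(n,k) = \sum_{i=1}^{n-k+1} g i * c(n-i,k-1),
   correctly whenever fuel >= n. *)
Fixpoint c_aux (fuel : nat) (g : nat -> nat) (n k : nat) : nat :=
  match fuel with
  | 0 => ((n == 0) && (k == 0) : nat)
  | fuel'.+1 =>
      if n is 0 then (k == 0 : nat) else
      if k is k'.+1 then \sum_(1 <= i < (n - k').+1) g i * c_aux fuel' g (n - i) k'
      else 0
  end.

Definition c (m n k : nat) : nat := c_aux n (f m.-1) n k.

Definition good_word (k : nat) (w : seq nat) : bool :=
  [&& count (pred1 1) w == k.-1,
      head 1 w == 0,
      last 1 w == 0,
      [forall i : 'I_(size w),
         (i.+2 < size w) ==>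
         ~~ [&& nth 0 w i == 0, nth 0 w i.+1 == 0 & nth 0 w i.+2 == 0]] &
      [forall i : 'I_(size w),
         (i.+1 < size w) ==> ((nth 0 w i == 0) || (nth 0 w i.+1 == 0))]].

From mathcomp Require Import all_boot ssralg poly zify.
From Stdlib Require Import FunctionalExtensionality.
Import GRing.Theory.

(* Let q = x^2 + x^3 be the generating function of f_0.  The invert transform
   maps F to F / (1 - F), so 1/F_m = 1/F_(m-1) - 1, i.e. F_(m-1) = q / (1 - (m-1) q)
   or F_(m-1) = q + (m-1) q F_(m-1).  As c_m(., k) has generating function
   F_(m-1)^k, the powers Y_k = F_(m-1)^k satisfy Y_0 = 1 and
   Y_(k+1) = q Y_k + (m-1) q Y_(k+1), which determines Y_(k+1) from Y_k because
   q has no constant term.  A good word is a sequence of blocks 0a or 00a, with a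
   a nonzero letter, followed by a final 0 or 00; splitting off the first block
   shows that the word counts satisfy the same recurrence, the factor m-1
   counting the nonzero letters other than 1. *)

Definition conv (a b : nat -> nat) (n : nat) : nat :=
  \sum_(i < n.+1) a i * b (n - i).

(* Associativity of [conv] is inherited from [{poly nat}]: the coefficients up
   to N of a convolution only involve the truncations of the factors at N. *)
Definition trunc_poly (N : nat) (a : nat -> nat) : {poly nat} :=
  \poly_(i < N.+1) a i.

Lemma conv_coefM N a b n :
  n <= N -> conv a b n = ((trunc_poly N a * trunc_poly N b)`_n)%R.
Proof.
move=> le_nN; rewrite coefM; apply: eq_bigr => -[i /= lt_in] _.
rewrite !coef_poly !ltnS (leq_trans (leq_subr _ _) le_nN).
by rewrite (leq_trans _ le_nN) // -ltnS.
Qed.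

Lemma coefM_low (p p' q q' : {poly nat}) n :
  (forall i, i <= n -> (p`_i = p'`_i)%R) -> (forall i, i <= n -> (q`_i = q'`_i)%R) ->
  ((p * q)`_n = (p' * q')`_n)%R.
Proof.
move=> eq_p eq_q; rewrite !coefM; apply: eq_bigr => -[i /= lt_in] _.
by rewrite eq_p -1?ltnS // eq_q // leq_subr.
Qed.

Lemma convC a b : conv a b = conv b a.
Proof. by apply: functional_extensionality => n; rewrite !(conv_coefM n) // mulrC. Qed.

Lemma convA a b c : conv (conv a b) c = conv a (conv b c).
Proof.
apply: functional_extensionality => n.
have trunc_conv x y i : i <= n ->
    ((trunc_poly n (conv x y))`_i = (trunc_poly n x * trunc_poly n y)`_i)%R.
  by move=> le_in; rewrite coef_poly ltnS le_in (conv_coefM n).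
rewrite (conv_coefM n) // (conv_coefM n a) //.
rewrite (@coefM_low _ (trunc_poly n a * trunc_poly n b) _ (trunc_poly n c) n
  (trunc_conv a b)) //.
by rewrite -mulrA; apply: coefM_low => // i /trunc_conv.
Qed.

Lemma convDl a b c : conv (fun n => a n + b n) c = fun n => conv a c n + conv b c n.
Proof.
apply: functional_extensionality => n.
by rewrite /conv -big_split; apply: eq_bigr => i _; rewrite mulnDl.
Qed.

Lemma convDr a b c : conv c (fun n => a n + b n) = fun n => conv c a n + conv c b n.
Proof. by rewrite convC convDl (convC a) (convC b). Qed.

Lemma convZl k a b : conv (fun n => k * a n) b = fun n => k * conv a b n.
Proof.
apply: functional_extensionality => n.
by rewrite /conv big_distrr; apply: eq_bigr => i _ /=; rewrite mulnA.
Qed.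

Lemma convZr k a b : conv a (fun n => k * b n) = fun n => k * conv a b n.
Proof. by rewrite convC convZl convC. Qed.

Lemma conv_uniq_fixpoint g a y z : g 0 = 0 ->
  (forall n, y n = a n + conv g y n) -> (forall n, z n = a n + conv g z n) ->
  y =1 z.
Proof.
move=> g0 eq_y eq_z; elim/ltn_ind => n IH.
rewrite eq_y eq_z; congr (_ + _); apply: eq_bigr => -[[|i] /= lt_in] _.
  by rewrite g0.
by rewrite IH //; lia.
Qed.

Lemma conv_f0_lt2 X n : n < 2 -> conv f0 X n = 0.
Proof. by case: n => [|[|]] // _; rewrite /conv !big_ord_recl big_ord0. Qed.

Lemma conv_f0_2 X : conv f0 X 2 = X 0.
Proof. by rewrite /conv !big_ord_recl big_ord0 /= addn0 mul1n. Qed.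

Lemma conv_f0_SSS X n : conv f0 X n.+3 = X n.+1 + X n.
Proof.
rewrite /conv !big_ord_recl big1 => [|i _] //.
by rewrite /= /bump /= !subSS !subn0 !mul0n !mul1n !add0n addn0.
Qed.

Lemma size_inv_list g n : size (inv_list g n) = n.+1.
Proof. by elim: n => //= n IH; rewrite size_rcons IH. Qed.

Lemma nth_inv_list g n i : i <= n -> nth 0 (inv_list g n) i = invert g i.
Proof.
elim: n => [|n IH]; first by rewrite leqn0 => /eqP ->.
rewrite leq_eqVlt => /orP[/eqP -> //|lt_in].
by rewrite /= nth_rcons size_inv_list lt_in IH.
Qed.

Lemma invertE g n : g 0 = 0 -> invert g n = g n + conv g (invert g) n.
Proof.
move=> g0; case: n => [|n]; first by rewrite /conv big_ord1 g0.
rewrite {1}/invert /= nth_rcons size_inv_list ltnn eqxx; congr (_ + _).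
rewrite /conv big_ord_recl g0 add0n big_ord_recr /= subnn muln0 addn0.
rewrite big_add1 /= big_mkord; apply: eq_bigr => -[i lt_in] _ /=.
by rewrite nth_inv_list // subSS leq_subr.
Qed.

Lemma f_at0 j : f j 0 = 0.
Proof. by case: j. Qed.

Lemma fE j : f j = fun n => f0 n + j * conv f0 (f j) n.
Proof.
elim: j => [|j IH]; first by apply: functional_extensionality => n; rewrite addn0.
set g := f j in IH *; set h := f j.+1.
have hE : h = fun n => g n + conv g h n.
  by apply: functional_extensionality => n; apply/invertE/f_at0.
have conv_gh : conv g h = fun n => conv f0 h n + j * conv f0 (conv g h) n.
  by rewrite {1}IH convDl convZl convA.
apply: functional_extensionality => n.
have conv_f0h : conv f0 h n = conv f0 g n + conv f0 (conv g h) n.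
  by rewrite {1}hE convDr.
by rewrite {1}hE conv_gh {1}IH conv_f0h mulSn mulnDr; lia.
Qed.

Fixpoint conv_pow (g : nat -> nat) (k : nat) : nat -> nat :=
  if k is k'.+1 then conv g (conv_pow g k') else fun n => n == 0.

Lemma conv_pow_lt g k n : g 0 = 0 -> n < k -> conv_pow g k n = 0.
Proof.
move=> g0; elim: k n => // k IH n lt_nk /=.
rewrite /conv big1 // => -[[|i] lt_in] _ /=; first by rewrite g0.
by rewrite IH ?muln0 //; lia.
Qed.

Lemma c_auxE fuel g n k : g 0 = 0 -> n <= fuel -> c_aux fuel g n k = conv_pow g k n.
Proof.
move=> g0; elim: fuel n k => [|fuel IH] n k.
  by rewrite leqn0 => /eqP ->; case: k => //= k; rewrite /conv big_ord1 g0.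
case: n => [|n] le_n_fuel /=; first by case: k => //= k; rewrite /conv big_ord1 g0.
case: k => // k /=; symmetry.
rewrite /conv -(big_mkord xpredT (fun i => g i * conv_pow g k (n.+1 - i))).
rewrite (big_cat_nat _ (n := 1)) //= big_nat1 g0 add0n.
rewrite (big_cat_nat _ (n := (n.+1 - k).+1)) //=; last by rewrite ltnS leq_subr.
rewrite [X in _ + X]big1_seq ?addn0 => [|i /andP[_]]; last first.
  rewrite mem_index_iota => /andP[lo_i hi_i].
  by rewrite conv_pow_lt ?muln0 //; lia.
by apply: eq_big_nat => i /andP[i_gt0 _]; rewrite IH //; lia.
Qed.

Lemma c_conv_pow m n k : c m.+1 n k = conv_pow (f m) k n.
Proof. by apply: c_auxE; first exact: f_at0. Qed.

Lemma conv_pow_fS m k n :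
  conv_pow (f m) k.+1 n =
  conv f0 (conv_pow (f m) k) n + m * conv f0 (conv_pow (f m) k.+1) n.
Proof. by rewrite /= {1}fE convDl convZl convA. Qed.

Section Words.

Variable m : nat.

Fixpoint words (L : nat) : seq (seq nat) :=
  if L is L'.+1 then [seq x :: w | x <- iota 0 m.+1, w <- words L'] else [:: [::]].

Lemma mem_words L w : (w \in words L) = (size w == L) && all (fun x => x < m.+1) w.
Proof.
elim: L w => [|L IH] w; first by case: w.
apply/allpairsP/idP => [[[x v] [x_m v_L ->]]|].
  by move: x_m v_L; rewrite mem_iota IH /= eqSS => -> /andP[-> ->].
case: w => [|x w] // /andP[w_L /andP[x_m w_m]].
by exists (x, w); rewrite mem_iota IH -(eqSS _ L) w_L.
Qed.

Lemma uniq_words L : uniq (words L).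
Proof.
elim: L => // L IH; apply: (allpairs_uniq (iota_uniq 0 m.+1) IH).
by move=> [x v] [y w] _ _ /= [-> ->].
Qed.

Lemma card_words L (Q : pred (seq nat)) :
  #|[set w : L.-tuple 'I_m.+1 | Q (map (@nat_of_ord m.+1) w)]| = count Q (words L).
Proof.
rewrite cardsE cardE /enum_mem size_filter -enumT.
rewrite -(count_map (fun w : L.-tuple 'I_m.+1 => map (@nat_of_ord m.+1) w) Q).
apply/permP/uniq_perm; last 1 first.
- move=> w; rewrite mem_words; apply/mapP/idP => [[t _ ->]|/andP[/eqP w_L w_m]].
    by rewrite size_map size_tuple eqxx; apply/allP => _ /mapP[x _ ->].
  have w'_L : size (map (fun x => inord x : 'I_m.+1) w) == L by rewrite size_map w_L.
  exists (Tuple w'_L); first by rewrite mem_enum.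
  rewrite /= -map_comp -[LHS]map_id; apply/eq_in_map => x x_w /=.
  by rewrite inordK // (allP w_m).
- rewrite map_inj_uniq ?enum_uniq // => t1 t2 /(inj_map val_inj).
  exact: val_inj.
- exact: uniq_words.
Qed.

Lemma count_words_cons (P : pred (seq nat)) L :
  count P (words L.+1) = \sum_(x <- iota 0 m.+1) count (fun w => P (x :: w)) (words L).
Proof.
rewrite -[words L.+1]/[seq x :: w | x <- iota 0 m.+1, w <- words L].
elim: (iota 0 m.+1) => [|x s IH]; first by rewrite big_nil.
by rewrite big_cons -IH /= count_cat count_map.
Qed.

End Words.

Definition ones (w : seq nat) : nat := count (pred1 1) w.

Definition no_three_zeros (w : seq nat) : bool :=
  all (fun i => (i.+2 < size w) ==>
         ~~ [&& nth 0 w i == 0, nth 0 w i.+1 == 0 & nth 0 w i.+2 == 0])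
      (iota 0 (size w)).

Definition isolated_nonzeros (w : seq nat) : bool :=
  all (fun i => (i.+1 < size w) ==> (nth 0 w i == 0) || (nth 0 w i.+1 == 0))
      (iota 0 (size w)).

Definition good_shape (w : seq nat) : bool :=
  [&& head 1 w == 0, last 1 w == 0, no_three_zeros w & isolated_nonzeros w].

Lemma forall_ord_iota n (P : pred nat) : [forall i : 'I_n, P i] = all P (iota 0 n).
Proof.
apply/forallP/allP => [P_ord i|P_iota i]; last by apply: P_iota; rewrite mem_iota /=.
by rewrite mem_iota => /andP[_ lt_in]; exact: (P_ord (Ordinal lt_in)).
Qed.

Lemma good_wordE k w : good_word k w = good_shape w && (ones w == k.-1).
Proof.
rewrite /good_shape /no_three_zeros /isolated_nonzeros -!forall_ord_iota.
by rewrite andbC.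
Qed.

Lemma iota0S n : iota 0 n.+1 = 0 :: map S (iota 0 n).
Proof. by rewrite /= -add1n iotaDl. Qed.

Lemma no_three_zeros_cons x w : no_three_zeros (x :: w) =
  ((1 < size w) ==> ~~ [&& x == 0, nth 0 w 0 == 0 & nth 0 w 1 == 0])
  && no_three_zeros w.
Proof. by rewrite /no_three_zeros [size _]/= iota0S /= all_map. Qed.

Lemma isolated_nonzeros_cons x w : isolated_nonzeros (x :: w) =
  ((0 < size w) ==> (x == 0) || (nth 0 w 0 == 0)) && isolated_nonzeros w.
Proof. by rewrite /isolated_nonzeros [size _]/= iota0S /= all_map. Qed.

Lemma good_shape_nz x w : x != 0 -> good_shape (x :: w) = false.
Proof. by move=> /negbTE x_nz; rewrite /good_shape /= x_nz. Qed.

Lemma good_shape_0nz x w : x != 0 -> good_shape [:: 0, x & w] = good_shape w.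
Proof.
move=> /negbTE x_nz; rewrite /good_shape !no_three_zeros_cons !isolated_nonzeros_cons.
case: w => [|y w] /=; first by rewrite x_nz.
by rewrite x_nz implybT; case: (y == 0); case: (last y w == 0); rewrite ?andbF ?andbT.
Qed.

Lemma good_shape_000 w : good_shape [:: 0, 0, 0 & w] = false.
Proof. by rewrite /good_shape no_three_zeros_cons /= andbF. Qed.

Lemma good_shape_00nz x w : x != 0 -> good_shape [:: 0, 0, x & w] = good_shape w.
Proof.
move=> x_nz; rewrite -(@good_shape_0nz x w x_nz) /good_shape.
by rewrite no_three_zeros_cons isolated_nonzeros_cons /= (negbTE x_nz).
Qed.

Definition count_good (m : nat) (p : seq nat) (L j : nat) : nat :=
  count (fun w => good_shape (p ++ w) && (ones w == j)) (words m L).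

(* The value at k = 0 is the unit of [conv], as for [conv_pow _ 0]. *)
Definition word_count (m k n : nat) : nat :=
  if k is j.+1 then count_good m.+1 [::] n.-1 j else n == 0.

Lemma sum_nonzero_letters m p L j :
    (forall x w, x != 0 -> good_shape (p ++ x :: w) = good_shape w) ->
  \sum_(x <- iota 1 m.+1)
     count (fun w => good_shape (p ++ x :: w) && (ones (x :: w) == j)) (words m.+1 L)
  = word_count m j L.+1 + m * word_count m j.+1 L.+1.
Proof.
move=> p_nz; rewrite big_cons; congr (_ + _).
  case: j => [|j]; rewrite /word_count /count_good.
    by rewrite (eq_count (a2 := pred0)) ?count_pred0 // => w; rewrite /= andbF.
  by apply: eq_count => w; rewrite p_nz.
rewrite (eq_big_seq (fun _ => count_good m.+1 [::] L j)) => [|x].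
  by rewrite big_const_seq count_predT size_iota iter_addn_0 mulnC.
rewrite mem_iota => /andP[x_gt1 _]; apply: eq_count => w.
have x_neq1 : (x == 1) = false by rewrite gtn_eqF.
by rewrite p_nz -?lt0n ?(ltnW x_gt1) // /ones /= x_neq1.
Qed.

Lemma count_good_nilS m L j : count_good m [::] L.+1 j = count_good m [:: 0] L j.
Proof.
rewrite /count_good count_words_cons -[iota 0 m.+1]/(0 :: iota 1 m) big_cons.
rewrite big1_seq ?addn0 => [|x /andP[_]]; first exact: eq_count.
rewrite mem_iota => /andP[x_gt0 _].
rewrite (eq_count (a2 := pred0)) ?count_pred0 // => w.
by rewrite /= good_shape_nz -?lt0n.
Qed.

Lemma count_good00 m L j :
  count_good m.+1 [:: 0; 0] L j = word_count m j L + m * word_count m j.+1 L.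
Proof.
case: L => [|L]; first by case: j => [|j] /=; rewrite muln0.
rewrite /count_good count_words_cons -[iota 0 m.+2]/(0 :: iota 1 m.+1) big_cons.
rewrite (eq_count (a2 := pred0)) ?count_pred0 => [|w]; last first.
  by rewrite /= good_shape_000.
by rewrite add0n sum_nonzero_letters // => x w; apply: good_shape_00nz.
Qed.

Lemma count_good0S m L j : count_good m.+1 [:: 0] L.+1 j =
  count_good m.+1 [:: 0; 0] L j + (word_count m j L.+1 + m * word_count m j.+1 L.+1).
Proof.
rewrite /count_good count_words_cons -[iota 0 m.+2]/(0 :: iota 1 m.+1) big_cons.
by rewrite sum_nonzero_letters // => x w; apply: good_shape_0nz.
Qed.

Lemma word_countS m k n :
  word_count m k.+1 n = conv f0 (word_count m k) n + m * conv f0 (word_count m k.+1) n.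
Proof.
pose U L := word_count m k L + m * word_count m k.+1 L.
have -> : conv f0 (word_count m k) n + m * conv f0 (word_count m k.+1) n = conv f0 U n.
  by rewrite /U convDr convZr.
case: n => [|[|n]]; try by rewrite conv_f0_lt2.
rewrite /= count_good_nilS.
case: n => [|n]; first by rewrite conv_f0_2 /U /= -count_good00.
by rewrite count_good0S conv_f0_SSS count_good00 addnC.
Qed.

Lemma conv_pow_f_word_count m k n : conv_pow (f m) k n = word_count m k n.
Proof.
elim: k n => [|k IH] n //.
have IH' : conv_pow (f m) k = word_count m k by apply: functional_extensionality.
apply: (@conv_uniq_fixpoint (fun i => m * f0 i) (conv f0 (word_count m k)))
  => [|{}n|{}n]; first exact: muln0.
- by rewrite convZl conv_pow_fS IH'.
- by rewrite convZl word_countS.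
Qed.

Theorem corollary31 (m n k : nat) :
  1 <= m -> 3 < n -> 1 <= k <= n ->
  c m n k =
  #|[set w : (n.-1).-tuple 'I_m.+1 | good_word k (map (@nat_of_ord m.+1) w)]|.
Proof.
case: m => // m _ _ /andP[k_gt0 _].
rewrite card_words (eq_count (good_wordE k)) c_conv_pow conv_pow_f_word_count.
by case: k k_gt0.
Qed.
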